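(* Let $0<r<1$ and $c>0$. For every extremally disconnected set $S$, the set $C(S,\mathbb{Z}((T))_{r,\le c})$ of continuous maps from $S$ to the topological space $\mathbb{Z}((T))_{r,\le c}$ is identified (via $F\mapsto$ its coefficient functions) with the set of formal sums $\sum_{n\ge k}a_nT^n$, for some $k\in\mathbb{Z}$, with $a_n\in C(S,\mathbb{Z})$ and $\sum_n|a_n(s)|r^n\le c$ for all $s\in S$. In other words, the condensed set defined by the latter sets is the condensation of the topological space $\mathbb{Z}((T))_{r,\le c}$.
   Context: $\mathbb{Z}((T))_{r,\le c}$ is the set of integer Laurent series $\sum_{n\gg-\infty}a_nT^n$ ($a_n\in\mathbb{Z}$, $a_n=0$ for $n$ sufficiently negative) with $\sum|a_n|r^n\le c$, topologized by the $T$-adic norm $\|f\|=\delta^{v_T(f)}$ for a fixed $\delta\in(0,1)$, where $v_T(f)$ is the smallest $n$ with $a_n\ne 0$ (so two series are close iff their coefficients agree up to a large index). An extremally disconnected set is a projective object in compact Hausdorff spaces; the condensation of a T1 space $X$ is $S\mapsto C(S,X)$. $\mathbb{Z}$ carries the discrete topology. *)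

From HB Require Import structures.
From mathcomp Require Import all_boot all_order all_algebra.
From mathcomp Require Import all_classical all_reals all_analysis.
Set Implicit Arguments. Unset Strict Implicit. Unset Printing Implicit Defensive.
Import Order.TTheory GRing.Theory Num.Theory.
Local Open Scope classical_set_scope.
Local Open Scope ring_scope.

(* An integer Laurent series sum_n a_n T^n is represented by its coefficient
   function a : int -> int; it must vanish for n sufficiently negative. *)
Definition laurent (a : int -> int) : Prop :=
  exists k : int, forall n : int, n < k -> a n = 0.

Definition rnorm_sum (R : realType) (r : R) (a : int -> int) : \bar R :=
  (\esum_(n in [set: int]) ((`|a n|%:~R * r ^ n)%:E))%E.

Definition in_Zrc (R : realType) (r c : R) (a : int -> int) : Prop :=
  laurent a /\ (rnorm_sum r a <= c%:E)%E.

Definition vT (a : int -> int) : int :=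
  xget 0 [set n | a n != 0 /\ forall m : int, m < n -> a m = 0].

Definition tnorm (R : realType) (delta : R) (a : int -> int) : R :=
  if `[< exists n, a n != 0 >] then delta ^ (vT a) else 0.

(* continuity of F : S -> Z((T))_{r,<=c} for the metric d(f,g) = ||f - g|| *)
Definition tcontinuous (R : realType) (delta : R) (S : topologicalType)
  (F : S -> int -> int) : Prop :=
  forall s : S, forall e : R, 0 < e ->
    \forall t \near s, tnorm delta (fun n => F t n - F s n) < e.

Definition compact_hausdorff (X : topologicalType) : Prop :=
  compact [set: X] /\ hausdorff_space X.

(* extremally disconnected set = projective object of CHaus *)
Definition extremally_disconnected_set (S : topologicalType) : Prop :=
  compact_hausdorff S /\
  forall (X Y : topologicalType) (p : X -> Y) (f : S -> Y),
    compact_hausdorff X -> compact_hausdorff Y ->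
    continuous p -> (forall y, exists x, p x = y) -> continuous f ->
    exists g : S -> X, continuous g /\ (forall s, p (g s) = f s).

Definition coeff_family (R : realType) (r c : R) (S : topologicalType)
  (a : int -> S -> int) : Prop :=
  (forall n : int, continuous (a n : S -> discrete_topology int)) /\
  (exists k : int, forall n : int, n < k -> forall s : S, a n s = 0) /\
  (forall s : S, (rnorm_sum r (fun n => a n s) <= c%:E)%E).

From HB Require Import structures.
From mathcomp Require Import all_boot all_order all_algebra.
From mathcomp Require Import all_classical all_reals all_analysis.
From mathcomp Require Import zify.
Import Order.TTheory GRing.Theory Num.Theory.
Local Open Scope ring_scope.
Set Implicit Arguments. Unset Strict Implicit.

(* Since [||f - g|| < delta ^ n] exactly when [f] and [g] agree up to the
   index [n], a map [F : S -> Z((T))] is continuous iff each coefficient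
   function [s |-> F s n] is locally constant, i.e. continuous into the
   discrete space [Z].  The bound [sum_n |a_n| r^n <= c] with [r < 1] forces
   [a_n = 0] as soon as [r ^ n > c], which gives a lower bound [k] on the
   support that is uniform in [s]; conversely, given continuous coefficients
   vanishing below [k], only the finitely many indices between [k] and [n]
   have to be made locally constant simultaneously.  The argument works for
   every topological space [S]. *)

Lemma ler_wiXz2l (R : realFieldType) (x : R) (m n : int) :
  0 < x -> x <= 1 -> m <= n -> x ^ n <= x ^ m.
Proof.
move=> x_gt0 x_le1 le_mn; rewrite -(subrK m n) expfzDr ?gt_eqF//.
have : 0 <= n - m by rewrite subr_ge0.
case: (n - m) => // k _.
by apply: ler_piMl; [exact/exprz_ge0/ltW | exact: exprn_ile1 (ltW x_gt0) x_le1].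
Qed.

Lemma exprz_gt_below (R : realType) (r c : R) : 0 < r < 1 -> 0 < c ->
  exists k : int, forall n, n < k -> c < r ^ n.
Proof.
move=> /andP[r_gt0 r_lt1] c_gt0.
have r_norm_lt1 : `|r| < 1 by rewrite ger0_norm ?ltW.
have cinv_gt0 : 0 < c^-1 by rewrite invr_gt0.
have [N _ rN_small] := cvgr0_norm_lt _ (cvg_expr r_norm_lt1) _ cinv_gt0.
exists (- N%:Z) => n lt_nN.
have -> : n = - `|n|%N%:Z by lia.
have le_Nn : (N <= `|n|)%N by lia.
have := rN_small `|n|%N le_Nn.
rewrite /= ger0_norm ?exprn_ge0 ?ltW// -exprnN => rn_lt.
by rewrite -[c]invrK ltf_pV2 ?posrE ?invr_gt0 ?exprn_gt0.
Qed.

Lemma laurentB (a b : int -> int) :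
  laurent a -> laurent b -> laurent (fun n => a n - b n).
Proof.
move=> [ka a0] [kb b0]; exists (Order.min ka kb) => n.
by rewrite lt_min => /andP[/a0 -> /b0 ->]; rewrite subrr.
Qed.

Lemma vTP (a : int -> int) : laurent a -> (exists n, a n != 0) ->
  a (vT a) != 0 /\ forall m, m < vT a -> a m = 0.
Proof.
move=> [k a0] [n0 an0].
apply: (@xgetPex _ 0 [set n | a n != 0 /\ forall m, m < n -> a m = 0]).
have le_kn0 : k <= n0 by rewrite leNgt; apply/negP => /a0; apply/eqP.
have ex_nz : exists j : nat, a (k + j%:Z) != 0.
  by exists `|n0 - k|%N; have -> : k + `|n0 - k|%N = n0 by lia.
case: (ex_minnP ex_nz) => j0 aj0 j0_min.
exists (k + j0%:Z); split => // m lt_m.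
have [/a0 //|le_km] := ltP m k.
apply/eqP/negPn/negP => am.
have : (j0 <= `|m - k|)%N by apply: j0_min; have -> : k + `|m - k|%N = m by lia.
lia.
Qed.

Section TAdicNorm.
Variables (R : realType) (delta : R).
Hypothesis delta01 : 0 < delta < 1.

Lemma tnorm_lt_exprz (d : int -> int) (n : int) :
  laurent d -> tnorm delta d < delta ^ n -> forall m, m <= n -> d m = 0.
Proof.
have /andP[delta_gt0 delta_lt1] := delta01.
move=> d_laurent; rewrite /tnorm; case: asboolP => [d_nz|d_z]; last first.
  by move=> _ m _; apply/eqP/negPn/negP => dm; apply: d_z; exists m.
have [_ d_below] := vTP d_laurent d_nz.
move=> lt_dn m le_mn; have [/d_below //|le_vm] := ltP m (vT d).
suff : delta ^ n <= delta ^ vT d by rewrite leNgt lt_dn.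
by apply: ler_wiXz2l => //; [exact: ltW | exact: le_trans le_vm le_mn].
Qed.

Lemma tnorm_le_exprz (d : int -> int) (n : int) :
  (forall m, m < n -> d m = 0) -> tnorm delta d <= delta ^ n.
Proof.
have /andP[delta_gt0 delta_lt1] := delta01.
move=> d_below; rewrite /tnorm; case: asboolP => [d_nz|_]; last first.
  exact/exprz_ge0/ltW.
have [vd_nz _] := vTP (ex_intro _ n d_below) d_nz.
apply: ler_wiXz2l => //; first exact: ltW.
by rewrite leNgt; apply/negP => /d_below; apply/eqP.
Qed.

End TAdicNorm.

Lemma continuous_discreteP (S : topologicalType) (T : choiceType) (f : S -> T) :
  continuous (f : S -> discrete_topology T) <->
  forall s, \forall t \near s, f t = f s.
Proof.
split=> [f_cont s | f_near s]; last exact/discrete_cvg/f_near.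
by have /discrete_cvg := f_cont s.
Qed.

Lemma near_coeffs_eq (S : topologicalType) (a : int -> S -> int) (k : int) :
  (forall n, continuous (a n : S -> discrete_topology int)) ->
  (forall n, n < k -> forall s, a n s = 0) ->
  forall (s : S) (N : nat), \forall t \near s, forall m, m < k + N%:Z -> a m t = a m s.
Proof.
move=> a_cont a_below s N.
have near_i : forall i : 'I_N, \forall t \near s, a (k + i%:Z) t = a (k + i%:Z) s.
  by move=> i; move/continuous_discreteP: (a_cont (k + i%:Z)).
apply: filterS (filter_forall _ near_i) => t a_eq m lt_m.
have [/a_below a0|le_km] := ltP m k; first by rewrite !a0.
have lt_iN : (`|m - k| < N)%N by lia.
have -> : m = k + (Ordinal lt_iN)%:Z by rewrite /=; lia.
exact: a_eq.
Qed.

Lemma rnorm_sum_ge_term (R : realType) (r : R) (a : int -> int) (n : int) :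
  0 <= r -> ((`|a n|%:~R * r ^ n)%:E <= rnorm_sum r a)%E.
Proof.
move=> r_ge0; apply: esum_ge; exists [set n]%classic; last by rewrite fsbig_set1.
by split; [exact: finite_set1 | by []].
Qed.

Lemma rnorm_sum_le_vanish_below (R : realType) (r c : R) :
  0 < r < 1 -> 0 < c ->
  exists k : int, forall a, (rnorm_sum r a <= c%:E)%E -> forall n, n < k -> a n = 0.
Proof.
move=> r01 c_gt0; have /andP[r_gt0 _] := r01.
have [k big_below] := exprz_gt_below r01 c_gt0.
exists k => a a_bound n lt_nk; apply/eqP/negPn/negP => an_nz.
have := le_trans (rnorm_sum_ge_term a n (ltW r_gt0)) a_bound.
rewrite lee_fin leNgt => /negP; apply; apply: lt_le_trans (big_below n lt_nk) _.
have an_ge1 : (1 : R) <= `|a n|%:~R by rewrite ler1z -gtz0_ge1 normr_gt0.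
by apply: ler_peMl => //; exact/exprz_ge0/ltW.
Qed.

Section Continuity.
Variables (R : realType) (delta : R) (S : topologicalType).
Hypothesis delta01 : 0 < delta < 1.

Lemma tcontinuous_coeff (F : S -> int -> int) :
  (forall s, laurent (F s)) -> tcontinuous delta F ->
  forall n, continuous ((fun s => F s n) : S -> discrete_topology int).
Proof.
have /andP[delta_gt0 _] := delta01.
move=> F_laurent F_cont n; apply/continuous_discreteP => s.
apply: filterS (F_cont s _ (exprz_gt0 n delta_gt0)) => t close_ts.
have := tnorm_lt_exprz delta01 (laurentB (F_laurent t) (F_laurent s)) close_ts (lexx n).
by move/eqP; rewrite subr_eq0 => /eqP.
Qed.

Lemma coeff_tcontinuous (a : int -> S -> int) (k : int) :
  (forall n, continuous (a n : S -> discrete_topology int)) ->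
  (forall n, n < k -> forall s, a n s = 0) ->
  tcontinuous delta (fun s n => a n s).
Proof.
have /andP[delta_gt0 delta_lt1] := delta01.
move=> a_cont a_below s e e_gt0.
have delta_norm_lt1 : `|delta| < 1 by rewrite ger0_norm ?ltW.
have [N _ deltaN_small] := cvgr0_norm_lt _ (cvg_expr delta_norm_lt1) _ e_gt0.
have := deltaN_small N (leqnn N); rewrite /= ger0_norm ?exprn_ge0 ?ltW// => lt_deltaN.
apply: filterS (near_coeffs_eq a_cont a_below s `|N%:Z - k|%N) => t a_eq.
apply: le_lt_trans lt_deltaN; apply: (tnorm_le_exprz (n := N%:Z) delta01).
by move=> m lt_mN; rewrite a_eq ?subrr //; lia.
Qed.

End Continuity.

Unset Implicit Arguments.

Theorem mainTheorem11 (R : realType) (r c delta : R) :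
  0 < r < 1 -> 0 < c -> 0 < delta < 1 ->
  forall S : topologicalType, extremally_disconnected_set S ->
    (forall F : S -> int -> int,
        (forall s, in_Zrc r c (F s)) -> tcontinuous delta F ->
        coeff_family r c (fun n s => F s n))
    /\
    (forall a : int -> S -> int, coeff_family r c a ->
        exists! F : S -> int -> int,
          (forall s, in_Zrc r c (F s)) /\ tcontinuous delta F /\
          (forall n s, F s n = a n s)).
Proof.
move=> r01 c_gt0 delta01 S _.
have [k vanish_below] := rnorm_sum_le_vanish_below r01 c_gt0.
split.
- move=> F F_in F_cont; split; last split.
  + have F_laurent s : laurent (F s) by case: (F_in s).
    move=> n; exact: (tcontinuous_coeff delta01 F_laurent F_cont).
  + by exists k => n lt_nk s; apply: vanish_below lt_nk; case: (F_in s).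
  + by move=> s; case: (F_in s).
- move=> a [a_cont [[ka a_below] a_bound]].
  exists (fun s n => a n s); split.
    split; last split => //.
    + by move=> s; split; [exists ka => n /a_below -> | exact: a_bound].
    + exact: (coeff_tcontinuous delta01 a_cont a_below).
  by move=> G [_ [_ G_eq]]; apply/funext => s; apply/funext => n; rewrite G_eq.
Qed.
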